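(* Let $G$ be a simple directed graph and $\sigma$ a set of its nodes. If $\sigma$ contains a clique of size $|\sigma|-1$ and $\sigma$ is not a clique, then $\sigma$ is not a stable motif (for any CTLN $W(G,\varepsilon,\delta)$ with legal parameters).
   Context: A clique is a set of nodes pairwise bidirectionally connected. Legal parameters: $\delta>0$, $0<\varepsilon<\frac{\delta}{\delta+1}$. $W=W(G,\varepsilon,\delta)$ has $W_{ii}=0$, $W_{ij}=-1+\varepsilon$ if $j\to i$, $W_{ij}=-1-\delta$ if $i\ne j$, $j\not\to i$; dynamics $\dot x_i=-x_i+[\sum_jW_{ij}x_j+\theta]_+$, $\theta>0$; CTLNs assumed nondegenerate ($\det(I-W_\sigma)\neq0$, Cramer determinants nonzero). $W_\sigma$ is the principal submatrix on $\sigma$. $\sigma$ is a permitted motif if $\theta(I-W_\sigma)^{-1}1_\sigma$ has all entries positive; a stable motif if permitted and all eigenvalues of $I-W_\sigma$ have positive real part. *)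

From HB Require Import structures.
From mathcomp Require Import all_boot all_order all_algebra.
From mathcomp Require Import complex.
From mathcomp Require Import Rstruct.
Set Implicit Arguments. Unset Strict Implicit. Unset Printing Implicit Defensive.
Import Order.TTheory GRing.Theory Num.Theory.
Local Open Scope ring_scope.

(* A simple directed graph on nodes 'I_n: edge relation e, with [e j i]
   meaning the edge j -> i; no self-loops. *)
Definition simple_digraph (n : nat) (e : rel 'I_n) : Prop :=
  forall i, ~~ e i i.

Definition is_clique (n : nat) (e : rel 'I_n) (tau : {set 'I_n}) : Prop :=
  forall i j, i \in tau -> j \in tau -> i != j -> e i j && e j i.

Definition legal_params (eps delta : Rdefinitions.R) : Prop :=
  0 < delta /\ 0 < eps /\ eps < delta / (delta + 1).

Definition ctln_W (n : nat) (e : rel 'I_n) (eps delta : Rdefinitions.R) : 'M[Rdefinitions.R]_n :=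
  \matrix_(i, j) (if i == j then 0
                  else if e j i then -1 + eps else -1 - delta).

Definition principal_sub (n : nat) (W : 'M[Rdefinitions.R]_n) (sigma : {set 'I_n})
  : 'M[Rdefinitions.R]_#|sigma| :=
  \matrix_(i, j) W (enum_val i) (enum_val j).

Definition IminusW (n : nat) (W : 'M[Rdefinitions.R]_n) (sigma : {set 'I_n})
  : 'M[Rdefinitions.R]_#|sigma| := 1%:M - principal_sub W sigma.

Definition cramer_det (n : nat) (W : 'M[Rdefinitions.R]_n) (sigma : {set 'I_n})
  (k : 'I_#|sigma|) : Rdefinitions.R :=
  \det (\matrix_(i, j) (if j == k then 1 else IminusW W sigma i j)).

Definition ctln_nondegenerate (n : nat) (W : 'M[Rdefinitions.R]_n) : Prop :=
  forall sigma : {set 'I_n},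
    \det (IminusW W sigma) != 0 /\ forall k : 'I_#|sigma|, @cramer_det n W sigma k != 0.

Definition permitted_motif (n : nat) (W : 'M[Rdefinitions.R]_n) (theta : Rdefinitions.R)
  (sigma : {set 'I_n}) : Prop :=
  forall i, 0 < (theta *: (invmx (IminusW W sigma) *m (const_mx 1 : 'cV[Rdefinitions.R]_#|sigma|))) i ord0.

Definition stable_motif (n : nat) (W : 'M[Rdefinitions.R]_n) (theta : Rdefinitions.R)
  (sigma : {set 'I_n}) : Prop :=
  permitted_motif W theta sigma /\
  forall z : Rdefinitions.R[i],
    root (map_poly (fun x : Rdefinitions.R => (x%:C)%C) (char_poly (IminusW W sigma))) z ->
    0 < complex.Re z.

From mathcomp Require Import all_boot all_order all_algebra.
From mathcomp Require Import complex.
From mathcomp Require Import Rstruct.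
From mathcomp Require Import polyrcf.
From mathcomp Require Import ring lra.
Set Implicit Arguments. Unset Strict Implicit. Unset Printing Implicit Defensive.
Import Order.TTheory GRing.Theory Num.Theory.
Local Open Scope ring_scope.

(* Order sigma so that I - W_sigma is eps I + (1 - eps) J, perturbed only in
   the row and the column of the vertex v outside the clique, by vectors b and a
   whose entries are 0 or eps + delta, one nonzero entry per edge missing at v.
   Right multiplication by this matrix preserves the span of the rows 1, e_v, b
   and acts on it by a 3x3 matrix M.  If an edge into v is missing, then
   sum b > eps, and Cramer's rule applied to the positive solution x of
   (I - W_sigma) x = 1 gives x_v det M = eps (eps - sum b) < 0.  Hence the cubic
   characteristic polynomial of M has a negative root, whose eigenvector lifts
   to a left eigenvector of I - W_sigma: sigma is not stable.  If only edges out
   of v are missing, comparing rows v and l (for a missing edge v -> l) of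
   (I - W_sigma) x = 1 already contradicts x > 0. *)

Lemma sumr_delta_mull (R : pzSemiRingType) (I : finType) (i : I) (F : I -> R) :
  \sum_j (j == i)%:R * F j = F i.
Proof.
under eq_bigr do rewrite mulr_natl mulrb.
by rewrite -big_mkcond big_pred1_eq.
Qed.

Lemma det_mx3 (R : comPzRingType) (f : nat -> nat -> R) :
  \det (\matrix_(i < 3, j < 3) f i j) =
    f 0 0 * (f 1 1 * f 2 2 - f 1 2 * f 2 1)
  - f 0 1 * (f 1 0 * f 2 2 - f 1 2 * f 2 0)
  + f 0 2 * (f 1 0 * f 2 1 - f 1 1 * f 2 0).
Proof.
rewrite (expand_det_row _ ord0) !big_ord_recl big_ord0 /cofactor.
rewrite !(expand_det_row _ ord0) !big_ord_recl !big_ord0 /cofactor.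
rewrite ?det_mx00 !det_mx11 !mxE /= !expr0 !expr1.
ring.
Qed.

Section NearCliqueMatrix.
Variables (R : comNzRingType) (k : nat) (eps : R) (v0 : 'I_k) (a b : 'I_k -> R).

Definition near_clique_mx : 'M[R]_k :=
  \matrix_(i, j) (1 - eps + (i == j)%:R * eps + (i == v0)%:R * b j + (j == v0)%:R * a i).

Lemma near_clique_mulmx_col m (X : 'M[R]_(k, m)) i c :
  (near_clique_mx *m X) i c = (1 - eps) * (\sum_j X j c) + eps * X i c
     + (i == v0)%:R * (\sum_j b j * X j c) + a i * X v0 c.
Proof.
rewrite mxE; under eq_bigr => j _ do rewrite mxE (eq_sym i j).
rewrite -(sumr_delta_mull i (fun j => eps * X j c)) mulr_sumr mulr_sumr.
rewrite -(sumr_delta_mull v0 (fun j => a i * X j c)) -!big_split /=.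
by apply: eq_bigr => j _; ring.
Qed.

Lemma near_clique_mulmx_row m (G : 'M[R]_(m, k)) c j :
  (G *m near_clique_mx) c j = (1 - eps) * (\sum_i G c i) + eps * G c j
     + (j == v0)%:R * (\sum_i a i * G c i) + b j * G c v0.
Proof.
rewrite mxE; under eq_bigr => i _ do rewrite mxE.
rewrite -(sumr_delta_mull j (fun i => eps * G c i)) mulr_sumr mulr_sumr.
rewrite -(sumr_delta_mull v0 (fun i => b j * G c i)) -!big_split /=.
by apply: eq_bigr => i _; ring.
Qed.

Hypotheses (a_v0 : a v0 = 0) (b_v0 : b v0 = 0).

Definition near_clique_basis : 'M[R]_(3, k) :=
  \matrix_(c, j) [:: 1; (j == v0)%:R; b j]`_c.

Definition near_clique_reduced : 'M[R]_3 :=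
  \matrix_(c, d) (nth [::] [:: [:: k%:R * (1 - eps) + eps; \sum_i a i; 1];
                               [:: 1 - eps; eps; 1];
                               [:: (1 - eps) * \sum_i b i; \sum_i a i * b i; eps]] c)`_d.

Lemma near_clique_reduced_mulmx :
  near_clique_reduced *m near_clique_basis = near_clique_basis *m near_clique_mx.
Proof.
apply/matrixP => c j; rewrite near_clique_mulmx_row.
under eq_bigr do rewrite mxE; under [X in (j == v0)%:R * X]eq_bigr do rewrite mxE.
rewrite !mxE !big_ord_recl big_ord0 !mxE.
case: c => [[|[|[|//]]] _] /=.
- under [X in (j == v0)%:R * X]eq_bigr do rewrite mulr1.
  by rewrite sumr_const card_ord; ring.
- under [X in (1 - eps) * X]eq_bigr do rewrite -[_%:R]mulr1.
  under [X in (j == v0)%:R * X]eq_bigr do rewrite mulrC.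
  by rewrite !sumr_delta_mull a_v0 eqxx /=; ring.
- by rewrite b_v0; ring.
Qed.

Lemma near_clique_basis_mulmx m (X : 'M[R]_(k, m)) c i :
  (near_clique_basis *m X) c i = [:: \sum_j X j i; X v0 i; \sum_j b j * X j i]`_c.
Proof.
rewrite mxE; under eq_bigr do rewrite mxE.
case: c => [[|[|[|//]]] _] /=.
- by under eq_bigr do rewrite mul1r.
- exact: sumr_delta_mull.
- by [].
Qed.

Lemma near_clique_basis_mul_const1 c :
  (near_clique_basis *m (const_mx 1 : 'cV[R]_k)) c 0 = [:: k%:R; 1; \sum_i b i]`_c.
Proof.
rewrite near_clique_basis_mulmx; case: c => [[|[|[|//]]] _] /=.
- by under eq_bigr do rewrite mxE; rewrite sumr_const card_ord.
- by rewrite mxE.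
- by under eq_bigr do rewrite mxE mulr1.
Qed.

Lemma near_clique_basis_eigen lam (w : 'rV[R]_3) :
  w *m near_clique_reduced = lam *: w ->
  (w *m near_clique_basis) *m near_clique_mx = lam *: (w *m near_clique_basis).
Proof.
by move=> wM; rewrite -mulmxA -near_clique_reduced_mulmx mulmxA wM scalemxAl.
Qed.

Lemma near_clique_reduced_det (x : 'cV[R]_k) :
  near_clique_mx *m x = const_mx 1 ->
  x v0 0 * \det near_clique_reduced = eps * (eps - \sum_i b i).
Proof.
move=> Ax1.
have Mz : near_clique_reduced *m (near_clique_basis *m x)
          = near_clique_basis *m const_mx 1.
  by rewrite mulmxA near_clique_reduced_mulmx -mulmxA Ax1.
have eqn c := congr1 (fun m : 'cV[R]_3 => m c 0) Mz.
move: (eqn ord0) (eqn (lift ord0 ord0)) (eqn ord_max); rewrite !near_clique_basis_mul_const1.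
rewrite !mxE !big_ord_recl !big_ord0 !near_clique_basis_mulmx !mxE /=.
rewrite /near_clique_reduced (det_mx3 (fun c d => (nth [::] _ c)`_d)) /=.
set S := \sum_j x j 0; set y := x v0 0; set Rb := \sum_j b j * x j 0.
set Sa := \sum_i a i; set Sb := \sum_i b i; set r := \sum_i a i * b i.
move=> E0 E1 E2.
(* Cramer's rule for the middle unknown [y] of the system E0-E2, whose matrix is
   [near_clique_reduced]: combine the equations with the cofactors of its
   middle column. *)
apply/eqP; rewrite -subr_eq0; apply/eqP; transitivity (
    - ((1 - eps) * eps - (1 - eps) * Sb)
      * ((k%:R * (1 - eps) + eps) * S + (Sa * y + (1 * Rb + 0)) - k%:R)
    + ((k%:R * (1 - eps) + eps) * eps - (1 - eps) * Sb)
      * ((1 - eps) * S + (eps * y + (1 * Rb + 0)) - 1)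
    - ((k%:R * (1 - eps) + eps) - (1 - eps))
      * ((1 - eps) * Sb * S + (r * y + (eps * Rb + 0)) - Sb)); first by ring.
by rewrite E0 E1 E2 !subrr; ring.
Qed.

End NearCliqueMatrix.

(* The rows of [near_clique_basis] may be dependent (when [b] is constant off
   [v0]), but [near_clique_reduced] acts as [eps] on their linear relations. *)
Lemma near_clique_basis_mulmx_eq0 (R : idomainType) k (eps : R) v0 (a b : 'I_k -> R)
    lam (w : 'rV[R]_3) :
  b v0 = 0 -> lam != eps -> w *m near_clique_reduced eps a b = lam *: w ->
  w *m near_clique_basis v0 b = 0 -> w = 0.
Proof.
move=> b_v0 lam_neq_eps wM wL0.
have col c := congr1 (fun m : 'rV[R]_3 => m 0 c) wM.
have at_v0 := congr1 (fun m : 'rV[R]_k => m 0 v0) wL0.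
have total := congr1 (fun m : 'rV[R]_k => (m *m (const_mx 1 : 'cV[R]_k)) 0 0) wL0.
move: (col ord0) (col (lift ord0 (lift ord0 ord0))) at_v0 total.
rewrite /= -mulmxA mul0mx !mxE !big_ord_recl !big_ord0 !near_clique_basis_mul_const1.
rewrite !mxE eqxx /= b_v0 !mulr1 mulr0 !addr0.
set w0 := w 0 ord0; set w1 := w 0 (lift ord0 ord0); set w2 := w 0 (lift ord0 _).
move=> E0 E2 Ev0 Esum.
have cancel z : (eps - lam) * z = 0 -> z = 0.
  by move/eqP; rewrite mulf_eq0 subr_eq0 eq_sym (negbTE lam_neq_eps) => /eqP.
have w2_0 : w2 = 0.
  by apply: cancel; rewrite mulrBl -E2 -[RHS]oppr0 -[in RHS]Ev0; ring.
have w0_0 : w0 = 0.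
  by apply: cancel; rewrite mulrBl -E0 -[RHS](mulr0 (eps - 1)) -[in RHS]Esum; ring.
have w1_0 : w1 = 0 by rewrite -Ev0 w0_0 add0r.
apply/rowP => c; rewrite mxE; case: c => [[|[|[|//]]] p].
- by rewrite -[RHS]w0_0; congr (w 0 _); apply: val_inj.
- by rewrite -[RHS]w1_0; congr (w 0 _); apply: val_inj.
- by rewrite -[RHS]w2_0; congr (w 0 _); apply: val_inj.
Qed.

Lemma near_clique_solution_not_pos (R : realFieldType) k (eps : R) v0
    (a b : 'I_k -> R) (x : 'cV[R]_k) l :
  0 < eps -> a v0 = 0 -> (forall j, b j = 0) -> eps <= a l ->
  near_clique_mx eps v0 a b *m x = const_mx 1 -> ~ (forall i, 0 < x i 0).
Proof.
move=> eps_gt0 a_v0 b0 eps_le_al Ax1 x_gt0.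
have row i := congr1 (fun m : 'cV[R]_k => m i 0) Ax1.
have Rb0 : \sum_j b j * x j 0 = 0 by rewrite big1 // => j _; rewrite b0 mul0r.
move: (row v0) (row l); rewrite /= !near_clique_mulmx_col !mxE a_v0 Rb0.
rewrite !mulr0 mul0r !addr0.
have : 0 < eps * x l 0 by apply: mulr_gt0.
have : 0 <= (a l - eps) * x v0 0 by apply: mulr_ge0; [rewrite subr_ge0 | exact: ltW].
lra.
Qed.

Lemma det_lt0_neg_eigenvalue (R : rcfType) n (M : 'M[R]_n) :
  odd n -> \det M < 0 -> exists2 lam, lam < 0 & eigenvalue M lam.
Proof.
move=> odd_n detM_lt0.
have p_neq0 : char_poly M != 0 by apply/monic_neq0/char_poly_monic.
set b := cauchy_bound (char_poly M).
have b_le0 : - b <= 0 by rewrite oppr_le0 cauchy_bound_ge0.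
have sign_change : (char_poly M).[- b] * (char_poly M).[0] < 0.
  rewrite -sgr_cp0 sgrM (sgp_minftyP (le_cauchy_bound p_neq0)) ?bound_in_itv //.
  rewrite /sgp_minfty size_char_poly (monicP (char_poly_monic M)) mulr1.
  rewrite horner_coef0 char_poly_det -signr_odd odd_n expr1 !mulN1r sgrN.
  by rewrite sgr1 gtr0_sg ?oppr_gt0 // mulr1.
have [lam lam_in root_lam] := poly_ivtoo b_le0 sign_change.
by exists lam; [rewrite (itvP lam_in) | rewrite eigenvalue_root_char].
Qed.

Lemma near_clique_row_neg_eigenvalue (R : rcfType) k (eps : R) v0 (a b : 'I_k -> R)
    (x : 'cV[R]_k) :
  0 < eps -> a v0 = 0 -> b v0 = 0 -> eps < \sum_i b i ->
  near_clique_mx eps v0 a b *m x = const_mx 1 -> 0 < x v0 0 ->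
  exists2 lam, lam < 0 & eigenvalue (near_clique_mx eps v0 a b) lam.
Proof.
move=> eps_gt0 a_v0 b_v0 Sb_gt Ax1 y_gt0.
have detM_lt0 : \det (near_clique_reduced eps a b) < 0.
  rewrite -(pmulr_rlt0 _ y_gt0) (near_clique_reduced_det a_v0 b_v0 Ax1).
  by rewrite pmulr_rlt0 // subr_lt0.
have [lam lam_lt0 /eigenvalueP [w wM w_neq0]] := @det_lt0_neg_eigenvalue _ 3 _ isT detM_lt0.
exists lam => //; apply/eigenvalueP; exists (w *m near_clique_basis v0 b).
  exact: near_clique_basis_eigen.
apply: contra w_neq0 => /eqP wL0; apply/eqP.
by apply: near_clique_basis_mulmx_eq0 b_v0 _ wM wL0; rewrite lt_eqF // (lt_trans lam_lt0).
Qed.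

Lemma near_clique_neg_eigenvalue (R : rcfType) k (eps : R) v0 (a b : 'I_k -> R)
    (x : 'cV[R]_k) :
  0 < eps -> a v0 = 0 -> b v0 = 0 ->
  (forall i, a i = 0 \/ eps < a i) -> (forall j, b j = 0 \/ eps < b j) ->
  (exists l, a l != 0 \/ b l != 0) ->
  near_clique_mx eps v0 a b *m x = const_mx 1 -> (forall i, 0 < x i 0) ->
  exists2 lam, lam < 0 & eigenvalue (near_clique_mx eps v0 a b) lam.
Proof.
move=> eps_gt0 a_v0 b_v0 a_cases b_cases [l al_bl] Ax1 x_gt0.
have [b0 | [j bj_neq0]] : (forall j, b j = 0) \/ exists j, b j != 0.
  case: (boolP [forall j, b j == 0]) => [/forallP b0 | /forallPn [j bj]].
    by left => j; apply/eqP.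
  by right; exists j.
- have al_gt : eps < a l.
    by case: (a_cases l) al_bl => [->|//]; rewrite b0 eqxx; case.
  by case: (near_clique_solution_not_pos eps_gt0 a_v0 b0 (ltW al_gt) Ax1).
- apply: (near_clique_row_neg_eigenvalue eps_gt0 a_v0 b_v0 _ Ax1 (x_gt0 v0)).
  have bj_gt : eps < b j by case: (b_cases j) bj_neq0 => // ->; rewrite eqxx.
  rewrite (bigD1 j) //= (lt_le_trans bj_gt) // lerDl sumr_ge0 // => i _.
  by case: (b_cases i) => [->|/ltW]; last exact/le_trans/ltW.
Qed.

Lemma permitted_motif_solution n (W : 'M[Rdefinitions.R]_n) theta sigma :
  0 < theta -> \det (IminusW W sigma) != 0 -> permitted_motif W theta sigma ->
  exists2 x : 'cV_#|sigma|, IminusW W sigma *m x = const_mx 1 & forall i, 0 < x i 0.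
Proof.
move=> theta_gt0 det_neq0 permitted.
have unitA : IminusW W sigma \in unitmx by rewrite unitmxE unitfE.
exists (invmx (IminusW W sigma) *m const_mx 1) => [|i].
  by rewrite mulmxA mulmxV // mul1mx.
by have := permitted i; rewrite mxE pmulr_rgt0.
Qed.

Lemma stable_motif_eigenvalue_gt0 n (W : 'M[Rdefinitions.R]_n) theta sigma lam :
  stable_motif W theta sigma -> eigenvalue (IminusW W sigma) lam -> 0 < lam.
Proof.
move=> [_ stable]; rewrite eigenvalue_root_char => root_lam.
exact: (stable _ (rmorph_root (real_complex _) root_lam)).
Qed.

Section CliqueMinusVertex.
Variables (n : nat) (e : rel 'I_n) (sigma : {set 'I_n}) (eps delta : Rdefinitions.R).
Variables (v : 'I_n) (v_in : v \in sigma).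
Hypothesis clique_v : is_clique e (sigma :\ v).

Definition missing_out (i : 'I_#|sigma|) : Rdefinitions.R :=
  if (enum_val i == v) || e v (enum_val i) then 0 else eps + delta.

Definition missing_in (j : 'I_#|sigma|) : Rdefinitions.R :=
  if (enum_val j == v) || e (enum_val j) v then 0 else eps + delta.

Lemma IminusW_near_clique :
  IminusW (ctln_W e eps delta) sigma
  = near_clique_mx eps (enum_rank_in v_in v) missing_out missing_in.
Proof.
set v0 := enum_rank_in v_in v.
have ev_v i : (enum_val i == v) = (i == v0).
  by rewrite -[v in LHS](enum_rankK_in v_in v_in) (inj_eq enum_val_inj).
apply/matrixP => i j; rewrite !mxE (inj_eq enum_val_inj) /missing_out /missing_in !ev_v.
case: (eqVneq i j) => [<-|ij].
  by case: (eqVneq i v0) => _ /=; ring.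
have ev_v0 : enum_val v0 = v by exact: enum_rankK_in.
have in_clique u : u != v0 -> enum_val u \in sigma :\ v.
  by move=> uv; rewrite !inE ev_v uv enum_valP.
case: (eqVneq i v0) => [iv|iv]; case: (eqVneq j v0) => [jv|jv] /=.
- by move: ij; rewrite iv jv eqxx.
- by rewrite iv ev_v0; case: (e _ _) => /=; ring.
- by rewrite jv ev_v0; case: (e _ _) => /=; ring.
- have ev_ij : enum_val i != enum_val j by rewrite (inj_eq enum_val_inj).
  by have /andP [_ ->] := clique_v (in_clique _ iv) (in_clique _ jv) ev_ij; ring.
Qed.

Lemma not_clique_missing_edge :
  eps + delta != 0 -> ~ is_clique e sigma ->
  exists l, missing_out l != 0 \/ missing_in l != 0.
Proof.
move=> c_neq0 not_clique.
case: (boolP [exists l, (missing_out l != 0) || (missing_in l != 0)]).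
  by move=> /existsP [l /orP]; exists l.
move=> /existsPn no_missing; exfalso; apply: not_clique => x y xs ys xy.
have edges_v u : u \in sigma -> u != v -> e v u && e u v.
  move=> us uv; have := no_missing (enum_rank_in us u).
  rewrite /missing_out /missing_in enum_rankK_in // (negbTE uv) /=.
  by case: (e v u); case: (e u v); rewrite /= ?eqxx ?(negbTE c_neq0).
case: (eqVneq x v) => [xv | xv]; first by rewrite xv edges_v // -xv eq_sym.
case: (eqVneq y v) => [yv | yv]; first by rewrite yv andbC edges_v // -yv.
by apply: clique_v; rewrite // !inE ?xv ?yv.
Qed.

Lemma clique_minus_vertex_neg_eigenvalue (x : 'cV_#|sigma|) :
  0 < eps -> 0 < delta -> ~ is_clique e sigma ->
  IminusW (ctln_W e eps delta) sigma *m x = const_mx 1 -> (forall i, 0 < x i 0) ->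
  exists2 lam, lam < 0 & eigenvalue (IminusW (ctln_W e eps delta) sigma) lam.
Proof.
move=> eps_gt0 delta_gt0 not_clique; rewrite IminusW_near_clique.
have ev_v0 : enum_val (enum_rank_in v_in v) = v by exact: enum_rankK_in.
apply: near_clique_neg_eigenvalue => //.
- by rewrite /missing_out ev_v0 eqxx.
- by rewrite /missing_in ev_v0 eqxx.
- by move=> i; rewrite /missing_out; case: ifP => _; [left | right; lra].
- by move=> j; rewrite /missing_in; case: ifP => _; [left | right; lra].
- by apply: not_clique_missing_edge; rewrite // gt_eqF // addr_gt0.
Qed.

End CliqueMinusVertex.

Lemma setD1_eq_of_card_pred (T : finType) (A B : {set T}) :
  B \subset A -> #|B| = (#|A| - 1)%N -> A != set0 -> exists2 v, v \in A & A :\ v = B.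
Proof.
move=> BA cardB A_neq0.
have /cards1P [v Dv] : #|A :\: B| == 1%N.
  by rewrite cardsDS // cardB subKn // card_gt0.
have v_AB : v \in A :\: B by rewrite Dv set11.
exists v; first by move: v_AB; rewrite inE => /andP [].
apply/setP => u; rewrite !inE; case: (boolP (u \in B)) => uB.
  rewrite (subsetP BA) // andbT; apply: contraTneq uB => ->.
  by move: v_AB; rewrite inE => /andP [].
by apply/negbTE/andP => -[/negP uv uA]; apply: uv; rewrite -in_set1 -Dv inE uB uA.
Qed.

Theorem proposition2 (n : nat) (e : rel 'I_n) (sigma : {set 'I_n})
  (eps delta theta : Rdefinitions.R) :
  simple_digraph e ->
  legal_params eps delta ->
  0 < theta ->
  ctln_nondegenerate (ctln_W e eps delta) ->
  (exists tau : {set 'I_n},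
      tau \subset sigma /\ #|tau| = (#|sigma| - 1)%N /\ is_clique e tau) ->
  ~ is_clique e sigma ->
  ~ stable_motif (ctln_W e eps delta) theta sigma.
Proof.
move=> _ [delta_gt0 [eps_gt0 _]] theta_gt0 nondeg [tau [tau_sub [tau_card tau_clique]]].
move=> not_clique stable.
have sigma_neq0 : sigma != set0.
  by apply: contra_notN not_clique => /eqP -> i j; rewrite inE.
have [v v_in sigma_v] := setD1_eq_of_card_pred tau_sub tau_card sigma_neq0.
have clique_v : is_clique e (sigma :\ v) by rewrite sigma_v.
have [x Ax1 x_gt0] := permitted_motif_solution theta_gt0 (nondeg sigma).1 stable.1.
have [lam lam_lt0 eig] :=
  clique_minus_vertex_neg_eigenvalue v_in clique_v eps_gt0 delta_gt0 not_clique Ax1 x_gt0.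
by have := stable_motif_eigenvalue_gt0 stable eig; rewrite ltNge ltW.
Qed.
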